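(* Assume $\beta>0$, $k>0$ and $u_0=-k$. Let $H(u,y)=\frac{y^2}{2}+\beta\left(-\frac{u^4}{4}+\frac{k+u_0}{3}u^3-\frac{ku_0}{2}u^2\right)=\frac{y^2}{2}+\beta\left(-\frac{u^4}{4}+\frac{k^2u^2}{2}\right)$, and for $h\in\left(0,\frac{\beta u_0^4}{4}\right)$ let $\Gamma_h$ be the closed component of $\{H(u,y)=h\}$ surrounding $(0,0)$. Then for every even positive integer $n$ the ratio $$G_n(h):=\frac{\oint_{\Gamma_h}u^n y\,du}{\oint_{\Gamma_h}y\,du}$$ is monotone for $h\in\left(0,\frac{\beta u_0^4}{4}\right)$.
   Context: For these parameters $(0,0)$ is a center of the Hamiltonian system $u'=y$, $y'=-\beta u(u-u_0)(k-u)$, and the curves $\Gamma_h$, $h\in(0,\beta u_0^4/4)$, form the periodic annulus around it, bounded by the heteroclinic orbits joining the saddles $(-k,0)$ and $(k,0)$. *)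

From HB Require Import structures.
From mathcomp Require Import all_boot all_order all_algebra.
From mathcomp Require Import all_classical all_reals all_analysis.
Set Implicit Arguments. Unset Strict Implicit. Unset Printing Implicit Defensive.
Import Order.TTheory GRing.Theory Num.Theory.
Local Open Scope classical_set_scope.
Local Open Scope ring_scope.

Section Defs.
Variable R : realType.

Definition Ham (beta k u0 u y : R) : R :=
  y ^+ 2 / 2 + beta * (- u ^+ 4 / 4 + (k + u0) / 3 * u ^+ 3 - k * u0 / 2 * u ^+ 2).

(* Gamma_h : the closed component of {H = h} surrounding (0,0), i.e. the part
   of the level set lying in the strip -k < u < k between the saddles
   (-k,0) and (k,0) (case u0 = -k). *)
Definition Gamma (beta k u0 h : R) : set (R * R) :=
  [set p | Ham beta k u0 p.1 p.2 = h /\ -k < p.1 < k].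

Definition Gamma_proj (beta k u0 h : R) : set R :=
  [set u | exists y, Gamma beta k u0 h (u, y)].

Definition ytop (beta k u0 h u : R) : R :=
  Num.sqrt (2 * (h - Ham beta k u0 u 0)).

(* Line integral  \oint_{Gamma_h} f(u) y du, Gamma_h oriented clockwise
   (upper branch traversed with increasing u, lower branch y = -ytop with
   decreasing u), so that it equals 2 \int_{-a}^{a} f(u) ytop(u) du. *)
Definition oint_fy (beta k u0 h : R) (f : R -> R) : R :=
  2 * Rintegral lebesgue_measure (Gamma_proj beta k u0 h)
        (fun u => f u * ytop beta k u0 h u).

Definition G_n (beta k u0 : R) (n : nat) (h : R) : R :=
  oint_fy beta k u0 h (fun u => u ^+ n) / oint_fy beta k u0 h (fun _ => 1).

Definition monotone_on (A : set R) (f : R -> R) : Prop :=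
  (forall x y, A x -> A y -> x <= y -> f x <= f y) \/
  (forall x y, A x -> A y -> x <= y -> f y <= f x).

End Defs.

(* G_n(h) is the mean of u^n against the weight y_h(u) = sqrt (2 (h - V u)) on
   [-k, k], where V u = beta (k^2 u^2 / 2 - u^4 / 4) is increasing in u^2 there.
   For h1 <= h2 the ratio y_h2 / y_h1 is nondecreasing in V u, hence in u^2, and
   so is u^n for even n; so passing from y_h1 to y_h2 moves mass towards larger
   u^n and the mean grows.  Concretely, take t in the well with t^n = G_n(h1) and
   lambda = y_h2(t) / y_h1(t): then (u^n - t^n) (y_h2(u) - lambda y_h1(u)) >= 0
   for all u, and integrating gives G_n(h2) >= t^n. *)

From HB Require Import structures.
From mathcomp Require Import all_boot all_order all_algebra.
From mathcomp Require Import all_classical all_reals all_analysis.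
From mathcomp Require Import ring lra.
Import Order.TTheory GRing.Theory Num.Theory.
Import numFieldNormedType.Exports.
Local Open Scope classical_set_scope.
Local Open Scope ring_scope.

Lemma ge0_subset_Rintegral {d} {T : measurableType d} {R : realType}
    (mu : {measure set T -> \bar R}) {A B : set T} {g : T -> R} :
  measurable A -> measurable B -> A `<=` B ->
  mu.-integrable B (EFin \o g) -> (forall x, B x -> 0 <= g x) ->
  \int[mu]_(x in A) g x <= \int[mu]_(x in B) g x.
Proof.
move=> mA mB AB ig g0.
rewrite -[in leRHS](setDUK AB) Rintegral_setU //; last 3 first.
- exact: measurableD.
- by rewrite setDUK.
- by rewrite disj_set2E setDIK.
by rewrite lerDl; apply: Rintegral_ge0 => x [/g0].
Qed.

Lemma sqr_le_itv (R : realDomainType) (a u : R) : - a <= u <= a -> u ^+ 2 <= a ^+ 2.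
Proof. by move=> /andP[au ua]; nra. Qed.

Section integral_on_segment.
Context {R : realType}.
Notation mu := (@lebesgue_measure R).
Implicit Types (a b x : R) (f g : R -> R).

Lemma continuous_integrable_itv a b g :
  continuous g -> mu.-integrable `[a, b] (EFin \o g).
Proof.
move=> cg; apply: continuous_compact_integrable; first exact: segment_compact.
exact: continuous_subspaceT.
Qed.

Lemma Rintegral_itv_gt0 a b x g : continuous g -> a < x < b ->
  (forall u, a <= u <= b -> 0 <= g u) -> 0 < g x ->
  0 < \int[mu]_(u in `[a, b]) g u.
Proof.
move=> cg /andP[ax xb] g0 gx.
have gx2 : 0 < g x / 2 by rewrite divr_gt0.
have /nbhs_ballP[e /= e0 ge] : \forall u \near x, g x / 2 < g u.
  have /cvgrPdist_lt/(_ _ gx2) := cg x.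
  by apply: filterS => u; rewrite ltr_distlC => /andP[+ _]; lra.
set r := Num.min (e / 2) (Num.min (x - a) (b - x)).
have r0 : 0 < r by rewrite !lt_min; apply/and3P; split; lra.
have re : r < e by rewrite gt_min; apply/orP; left; lra.
have rxa : r <= x - a by rewrite !ge_min lexx orbT.
have rbx : r <= b - x by rewrite !ge_min lexx !orbT.
have sub : `[x - r, x + r] `<=` `[a, b].
  by apply: subset_itv; rewrite bnd_simp; lra.
have le_sub : (\int[mu]_(u in `[x - r, x + r]) g u) <= \int[mu]_(u in `[a, b]) g u.
  apply: (ge0_subset_Rintegral mu _ _ sub).
  - exact: measurable_itv.
  - exact: measurable_itv.
  - exact: continuous_integrable_itv.
  - by move=> u /=; rewrite in_itv /= => /g0.
apply: lt_le_trans le_sub.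
have le_cst : (\int[mu]_(u in `[x - r, x + r]) (g x / 2)) <=
              \int[mu]_(u in `[x - r, x + r]) g u.
  apply: le_Rintegral.
  - exact: measurable_itv.
  - by apply: continuous_integrable_itv => ?; exact: cvg_cst.
  - exact: continuous_integrable_itv.
  move=> u /=; rewrite in_itv /= => ur; apply/ltW/ge.
  by rewrite /ball /= (le_lt_trans _ re) // ler_distlC.
apply: lt_le_trans le_cst.
rewrite Rintegral_cst; last exact: measurable_itv.
have /= -> := @lebesgue_measure_itv R `[x - r, x + r].
rewrite lte_fin ifT /=; last lra.
by apply: mulr_gt0; lra.
Qed.

Lemma weighted_mean_le a b (f w1 w2 : R -> R) (c l : R) :
  continuous f -> continuous w1 -> continuous w2 ->
  (forall u, a <= u <= b -> 0 <= (f u - c) * (w2 u - l * w1 u)) ->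
  \int[mu]_(u in `[a, b]) (f u * w1 u) = c * \int[mu]_(u in `[a, b]) w1 u ->
  c * \int[mu]_(u in `[a, b]) w2 u <= \int[mu]_(u in `[a, b]) (f u * w2 u).
Proof.
move=> cf cw1 cw2 sign mean1.
have cfw (w : R -> R) : continuous w -> continuous (fun u => f u * w u).
  by move=> cw x; apply: cvgM; [exact: cf | exact: cw].
have ccw (w : R -> R) : continuous w -> continuous (fun u => c * w u).
  by move=> cw x; apply: cvgM; [exact: cvg_cst | exact: cw].
have cB (w : R -> R) : continuous w -> continuous (fun u => f u * w u - c * w u).
  by move=> cw x; apply: cvgB; [exact: (cfw _ cw x) | exact: (ccw _ cw x)].
have clB : continuous (fun u => l * (f u * w1 u - c * w1 u)).
  by move=> x; apply: cvgM; [exact: cvg_cst | exact: (cB _ cw1 x)].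
have : 0 <= \int[mu]_(u in `[a, b])
              ((f u * w2 u - c * w2 u) - l * (f u * w1 u - c * w1 u)).
  apply: Rintegral_ge0 => u; rewrite /= in_itv /= => /sign.
  by congr (0 <= _); ring.
have mI : measurable `[a, b] by exact: measurable_itv.
have I := continuous_integrable_itv a b.
rewrite RintegralB // ?RintegralZl ?RintegralB ?RintegralZl //;
  do ?[exact: I | exact: I (cB _ _) | exact: I (cfw _ _) | exact: I (ccw _ _)].
by rewrite mean1 subrr mulr0 subr0 subr_ge0.
Qed.

End integral_on_segment.

Section quartic_potential.
Variables (R : realType) (beta k : R).
Hypotheses (beta_gt0 : 0 < beta) (k_gt0 : 0 < k).
Notation mu := (@lebesgue_measure R).

Definition potential (u : R) : R := beta * (k ^+ 2 * u ^+ 2 / 2 - u ^+ 4 / 4).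

(* [Num.sqrt] vanishes on negative numbers, so [branch h] is 0 outside the well. *)
Definition branch (h u : R) : R := Num.sqrt (2 * (h - potential u)).

Lemma HamE u y : Ham beta k (- k) u y = y ^+ 2 / 2 + potential u.
Proof. by rewrite /Ham /potential; ring. Qed.

Lemma ytopE h u : ytop beta k (- k) h u = branch h u.
Proof. by rewrite /ytop HamE /branch expr0n /= mul0r add0r. Qed.

Lemma potentialN u : potential (- u) = potential u.
Proof. by rewrite /potential; ring. Qed.

Lemma potential0 : potential 0 = 0.
Proof. by rewrite /potential; ring. Qed.

Lemma potential_saddle : potential k = beta * (- k) ^+ 4 / 4.
Proof. by rewrite /potential; field. Qed.

Lemma potential_le u v : u ^+ 2 <= v ^+ 2 -> v ^+ 2 <= k ^+ 2 ->
  potential u <= potential v.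
Proof.
move=> uv vk; rewrite -subr_ge0.
have -> : potential v - potential u =
    beta / 4 * ((v ^+ 2 - u ^+ 2) * (2 * k ^+ 2 - u ^+ 2 - v ^+ 2)).
  by rewrite /potential; field.
by apply: mulr_ge0; [rewrite divr_ge0 ?ltW | apply: mulr_ge0; lra].
Qed.

Lemma branch_continuous h : continuous (branch h).
Proof.
move=> x; apply: (continuous_comp (f := fun u => 2 * (h - potential u)));
  last exact: sqrt_continuous.
apply: cvgM; first exact: cvg_cst.
apply: cvgB; first exact: cvg_cst.
rewrite /potential; apply: cvgM; first exact: cvg_cst.
apply: cvgB; apply: cvgM; try exact: cvg_cst.
  by apply: cvgM; [exact: cvg_cst | exact: exprn_continuous].
exact: exprn_continuous.
Qed.

Lemma branch_ge0 h u : 0 <= branch h u.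
Proof. exact: sqrtr_ge0. Qed.

Lemma branch_eq0 h u : h <= potential u -> branch h u = 0.
Proof. by move=> hV; rewrite /branch ler0_sqrtr // mulr_ge0_le0 // subr_le0. Qed.

Lemma branch_gt0 h u : potential u < h -> 0 < branch h u.
Proof. by move=> Vh; rewrite sqrtr_gt0 mulr_gt0 // subr_gt0. Qed.

(* The ratio [branch h2 / branch h1] is nondecreasing in the potential. *)
Lemma branch_cross h1 h2 u v : h1 <= h2 -> potential v <= potential u ->
  branch h2 v * branch h1 u <= branch h2 u * branch h1 v.
Proof.
move=> h12 Vvu.
have [hV|Vh] := lerP h1 (potential u).
  by rewrite (branch_eq0 _ _ hV) mulr0 mulr_ge0 // branch_ge0.
rewrite /branch -!sqrtrM; try by apply: mulr_ge0; lra.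
rewrite ler_sqrt; last by apply: mulr_ge0; apply: mulr_ge0; lra.
have : 0 <= (h2 - h1) * (potential u - potential v) by apply: mulr_ge0; lra.
lra.
Qed.

Lemma oint_fyE h f : h < potential k ->
  oint_fy beta k (- k) h f = 2 * \int[mu]_(u in `[- k, k]) (f u * branch h u).
Proof.
move=> hk; rewrite /oint_fy [in LHS]Rintegral_mkcond [in RHS]Rintegral_mkcond.
congr (2 * _); congr Rintegral; apply/funext => u; rewrite !patchE.
have [|notG] := boolP (u \in Gamma_proj beta k (- k) h).
  rewrite inE => -[y [_ /andP[ku uk]]].
  by rewrite ytopE mem_set //= in_itv /= !ltW.
case: ifPn => // /set_mem /=; rewrite in_itv /= => /andP[ku uk].
suff hV : h <= potential u by rewrite branch_eq0 // mulr0.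
rewrite leNgt; apply/negP => Vh; move/negP: notG; apply; rewrite inE.
exists (branch h u); split.
  by rewrite HamE /branch sqr_sqrtr ?mulr_ge0 ?subr_ge0 ?ltW //; field.
rewrite /= !lt_neqAle ku uk !andbT; apply/andP; split; apply/eqP => ek.
  by move: Vh; rewrite -ek potentialN; lra.
by move: Vh; rewrite ek; lra.
Qed.

Lemma branch_integral_gt0 h : 0 < h -> 0 < \int[mu]_(u in `[- k, k]) branch h u.
Proof.
move=> h0; apply: (Rintegral_itv_gt0 _ _ 0 _ (branch_continuous h)).
- by rewrite oppr_lt0 k_gt0.
- by move=> u _; exact: branch_ge0.
by rewrite branch_gt0 // potential0.
Qed.

Definition branch_mean (n : nat) (h : R) : R :=
  (\int[mu]_(u in `[- k, k]) (u ^+ n * branch h u)) /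
  \int[mu]_(u in `[- k, k]) branch h u.

Lemma G_nE n h : h < potential k -> G_n beta k (- k) n h = branch_mean n h.
Proof.
move=> hk; rewrite /G_n /branch_mean !oint_fyE //.
under [X in _ / (2 * X)]eq_Rintegral do rewrite mul1r.
by rewrite invfM mulrACA divff ?mul1r.
Qed.

(* Both factors change sign exactly at [u ^+ 2 = t ^+ 2]. *)
Lemma branch_crossing m h1 h2 t u : h1 <= h2 -> t ^+ 2 <= k ^+ 2 ->
  potential t < h1 -> u ^+ 2 <= k ^+ 2 ->
  0 <= (u ^+ (2 * m) - t ^+ (2 * m)) *
       (branch h2 u - branch h2 t / branch h1 t * branch h1 u).
Proof.
move=> h12 tk Vt uk; have p1t := branch_gt0 _ _ Vt.
rewrite !exprM mulrAC.
have [tu|ut] := lerP (t ^+ 2) (u ^+ 2).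
  apply: mulr_ge0; rewrite subr_ge0.
    by apply: lerXn2r; rewrite ?nnegrE ?sqr_ge0.
  by rewrite ler_pdivrMr // branch_cross // potential_le.
apply: mulr_le0; rewrite subr_le0.
  by apply: lerXn2r; rewrite ?nnegrE ?sqr_ge0 ?ltW.
by rewrite ler_pdivlMr // branch_cross // potential_le // ltW.
Qed.

Lemma branch_mean_lt m h c : (0 < m)%N -> 0 < h -> 0 < c ->
  (forall u, - k <= u <= k -> potential u < h -> u ^+ (2 * m) <= c) ->
  branch_mean (2 * m) h < c.
Proof.
move=> m0 h0 c0 le_c.
have mI : measurable `[- k, k] by exact: measurable_itv.
have int_b := continuous_integrable_itv (- k) k _ (branch_continuous h).
have int_pb : mu.-integrable `[- k, k] (EFin \o (fun u => u ^+ (2 * m) * branch h u)).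
  apply: continuous_integrable_itv => x.
  by apply: cvgM; [exact: exprn_continuous | exact: branch_continuous].
have int_cb : mu.-integrable `[- k, k] (EFin \o (fun u => c * branch h u)).
  apply: continuous_integrable_itv => x.
  by apply: cvgM; [exact: cvg_cst | exact: branch_continuous].
have : 0 < \int[mu]_(u in `[- k, k]) ((c - u ^+ (2 * m)) * branch h u).
  apply: (Rintegral_itv_gt0 _ _ 0).
  - move=> x; apply: cvgM; last exact: branch_continuous.
    by apply: cvgB; [exact: cvg_cst | exact: exprn_continuous].
  - by rewrite oppr_lt0 k_gt0.
  - move=> u uk; have [hV|Vh] := lerP h (potential u).
      by rewrite branch_eq0 // mulr0.
    by rewrite mulr_ge0 ?branch_ge0 // subr_ge0 le_c.
  by rewrite expr0n muln_eq0 /= eqn0Ngt m0 subr0 mulr_gt0 ?branch_gt0 ?potential0.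
under eq_Rintegral do rewrite mulrBl.
rewrite RintegralB // RintegralZl // subr_gt0.
by rewrite /branch_mean ltr_pdivrMr ?branch_integral_gt0 // mulrC.
Qed.

(* [t] lies in the well: otherwise [u ^+ (2 * m)] would stay below its own mean
   on the whole well. *)
Lemma branch_mean_root m h : (0 < m)%N -> 0 < h -> h < potential k ->
  exists t, [/\ 0 <= t, t <= k, potential t < h &
                t ^+ (2 * m) = branch_mean (2 * m) h].
Proof.
move=> m0 h0 hk; set c := branch_mean (2 * m) h.
have c0 : 0 <= c.
  apply: divr_ge0; last exact/ltW/branch_integral_gt0.
  apply: Rintegral_ge0 => u _.
  by rewrite mulr_ge0 ?branch_ge0 // exprM exprn_ge0 ?sqr_ge0.
set t := c `^ ((2 * m)%:R^-1).
have tc : t ^+ (2 * m) = c.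
  rewrite -powR_mulrn ?powR_ge0 // -powRrM mulVf ?powRr1 //.
  by rewrite pnatr_eq0 muln_eq0 negb_or /= -lt0n m0.
exists t; suff [tk Vt] : t <= k /\ potential t < h by split; rewrite ?powR_ge0.
have [c_eq0|c_neq0] := eqVneq c 0.
  move: tc; rewrite c_eq0 => /eqP; rewrite expf_eq0 => /andP[_ /eqP ->].
  by rewrite potential0 ltW.
case: (boolP ((t <= k) && (potential t < h))) => [/andP//|outside]; exfalso.
suff : c < c by rewrite ltxx.
apply: branch_mean_lt => //; first by rewrite lt_neqAle eq_sym c_neq0.
move=> u /sqr_le_itv uk Vu; rewrite -tc !exprM.
apply: lerXn2r; rewrite ?nnegrE ?sqr_ge0 //.
rewrite leNgt; apply/negP => tu; move/negP: outside; apply.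
have tk : t <= k by rewrite -ler_sqr ?nnegrE ?powR_ge0 ?(ltW k_gt0) //= (le_trans (ltW tu) uk).
by rewrite tk (le_lt_trans (potential_le _ _ (ltW tu) uk) Vu).
Qed.

Lemma branch_mean_le m h1 h2 : (0 < m)%N -> 0 < h1 -> h1 <= h2 -> h2 < potential k ->
  branch_mean (2 * m) h1 <= branch_mean (2 * m) h2.
Proof.
move=> m0 h10 h12 h2k.
have [t [t0 tk Vt tc]] := branch_mean_root _ _ m0 h10 (le_lt_trans h12 h2k).
have A1 := branch_integral_gt0 _ h10.
have A2 := branch_integral_gt0 _ (lt_le_trans h10 h12).
rewrite {2}/branch_mean ler_pdivlMr // -tc.
apply: (weighted_mean_le _ _ _ (branch h1) _ _ (branch h2 t / branch h1 t)).
- exact: exprn_continuous.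
- exact: branch_continuous.
- exact: branch_continuous.
- move=> u /sqr_le_itv uk /=; apply: branch_crossing => //.
  by apply: sqr_le_itv; rewrite tk (le_trans _ t0) // oppr_le0 ltW.
- by rewrite tc /branch_mean divfK // gt_eqF.
Qed.

End quartic_potential.

Theorem proposition3p11 (R : realType) (beta k u0 : R) (n : nat) :
  0 < beta -> 0 < k -> u0 = - k ->
  (0 < n)%N -> ~~ odd n ->
  monotone_on [set h : R | 0 < h < beta * u0 ^+ 4 / 4] (G_n beta k u0 n).
Proof.
move=> beta_gt0 k_gt0 -> n_gt0 n_even.
have n_half : n = (2 * n./2)%N by rewrite mul2n -[LHS]odd_double_half (negbTE n_even).
have half_gt0 : (0 < n./2)%N by move: n_gt0; rewrite {1}n_half muln_gt0 => /andP[].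
left => h1 h2 /= /andP[h1_gt0 h1_lt] /andP[_ h2_lt] h12.
rewrite -potential_saddle in h1_lt h2_lt.
by rewrite !G_nE // n_half; apply: branch_mean_le.
Qed.
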